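(* Let $D\ge2$, and let MOO (''Move Only Outwards'') be any lazy and local deterministic online algorithm for the infinite server problem on layered graphs that moves servers along edges only in the direction away from the source. Then the competitive ratio of MOO on layered graphs of depth $D$ is exactly $D-\frac12$: on every layered graph of depth $D$ it is $(D-\frac12)$-competitive, and for every $\rho<D-\frac12$ there is a layered graph of depth $D$ on which it is not $\rho$-competitive.
   Context: A layered graph of depth $D$ is a graph whose (possibly infinitely many) nodes are arranged in layers $0,1,\dots,D$ such that all edges run between adjacent layers, layer $0$ consists of a single node, and every node other than that one is adjacent to at least one node of the previous layer. Its metric is the shortest-path (number of edges) distance; the single node of layer $0$ is the source. Infinite server problem: an unbounded number of servers initially reside at the source; a finite sequence of requests (nodes) is revealed one by one; each must be served immediately, without knowledge of future requests, by moving a server to it; the cost is the total distance traveled. An algorithm is lazy if it moves only one server to serve a request at an unoccupied point and moves no server if the requested point is already occupied. It is local if it moves a server from $a$ to $b$ only when there is no server at some other point $c$ with $d(a,b)=d(a,c)+d(c,b)$. An online algorithm is $\rho$-competitive if $ALG(\sigma)\le\rho\,OPT(\sigma)+c$ for all $\sigma$, with $c$ independent of $\sigma$; its competitive ratio is the infimum of such $\rho$. *)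

From Stdlib Require Import Reals Lra Lia Arith List ClassicalEpsilon.
Set Implicit Arguments.

(* The least natural number satisfying P (classically chosen; junk 0 if none). *)
Definition nat_min (P : nat -> Prop) : nat :=
  epsilon (inhabits 0) (fun n => P n /\ forall m, P m -> n <= m).

Record layered_graph (D : nat) := {
  node : Type;
  adj : node -> node -> Prop;
  layer : node -> nat;
  src : node;
  adj_sym : forall u v, adj u v -> adj v u;
  layer_le : forall v, layer v <= D;
  layer0 : forall v, layer v = 0 <-> v = src;
  adj_layer : forall u v, adj u v -> layer v = S (layer u) \/ layer u = S (layer v);
  has_parent : forall v, v <> src -> exists u, adj u v /\ S (layer u) = layer v
}.

Section Graph.
Variables (D : nat) (G : layered_graph D).
Local Notation V := (node G).

Inductive walk : V -> V -> nat -> Prop :=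
| walk0 : forall u, walk u u 0
| walkS : forall u w v n, adj G u w -> walk w v n -> walk u v (S n).

Definition dist (u v : V) : nat := nat_min (walk u v).

Inductive out_walk : V -> V -> Prop :=
| out0 : forall u, out_walk u u
| outS : forall u w v, adj G u w -> layer G w = S (layer G u) -> out_walk w v -> out_walk u v.

(* Configurations: servers are labelled by nat; a configuration is a finite
   list L giving the positions of servers 0..|L|-1, all other servers being
   at the source (so infinitely many servers always sit at the source). *)
Definition config := list V.
Definition pos (L : config) (i : nat) : V := nth i L (src G).
Definition served (L : config) (r : V) : Prop := exists i, pos L i = r.

Fixpoint sum_nat (f : nat -> nat) (n : nat) : nat :=
  match n with O => O | S k => sum_nat f k + f k end.

Definition move_cost (L L' : config) : nat :=
  sum_nat (fun i => dist (pos L i) (pos L' i)) (Nat.max (length L) (length L')).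

Definition initial (L : config) : Prop := forall i, pos L i = src G.

(* Deterministic online algorithm: the configuration after serving a request
   sequence depends only on that sequence (i.e. on requests seen so far). *)
Record online_alg := {
  conf : list V -> config;
  conf_init : initial (conf nil);
  conf_serves : forall s r, served (conf (s ++ r :: nil)) r
}.

Definition alg_cost (A : online_alg) (s : list V) : nat :=
  sum_nat (fun t => move_cost (conf A (firstn t s)) (conf A (firstn (S t) s)))
          (length s).

Definition valid_schedule (s : list V) (C : nat -> config) : Prop :=
  initial (C 0) /\ forall t, t < length s -> served (C (S t)) (nth t s (src G)).

Definition sched_cost (s : list V) (C : nat -> config) : nat :=
  sum_nat (fun t => move_cost (C t) (C (S t))) (length s).

Definition OPT (s : list V) : nat :=
  nat_min (fun n => exists C, valid_schedule s C /\ sched_cost s C = n).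

Definition competitive (A : online_alg) (rho : R) : Prop :=
  exists c : R, forall s : list V,
    (INR (alg_cost A s) <= rho * INR (OPT s) + c)%R.

Definition MOO (A : online_alg) : Prop :=
  forall s r,
    let L := conf A s in
    let L' := conf A (s ++ r :: nil) in
    (served L r -> forall i, pos L' i = pos L i) /\
    (~ served L r ->
       exists j, pos L' j = r /\
         (forall i, i <> j -> pos L' i = pos L i) /\
         (* local *)
         (forall c, c <> pos L j -> c <> r ->
            dist (pos L j) r = dist (pos L j) c + dist c r -> ~ served L c) /\
         (* outwards *)
         out_walk (pos L j) r).

End Graph.

(* Upper bound: a potential argument.  Each offline server is charged (2D - 1) times its distance
   to its anchor, the last request it served, plus the weight 2D - 2 - layer(anchor) and, once
   MOO's server has left the anchor, 2 layer(anchor).  A MOO move from q to r costs at most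
   layer r - layer q; re-anchoring the offline server at r releases at least 2 layer r, while
   vacating q costs at most 2 layer q.  Hence twice MOO's cost is at most (2D - 1) times any
   offline cost.

   Lower bound: layer D - 1 consists of infinitely many hubs, and each tip of layer D is
   adjacent to three hubs.  With MOO's servers on hubs x and y, request the tip above x, y and a
   fresh hub n.  Moving outwards and locally, MOO must lift the server of x or y, say v, to the
   tip; then requesting v and n costs D - 1 each, served from the root.  The offline server of
   the other hub goes up to the tip and down to n, so a phase costs 2D - 1 against 2. *)

From Stdlib Require Import Reals Lra Lia List ClassicalEpsilon Classical Wf_nat.
(* Imported after [Reals], whose own [sum_nat] it must shadow. *)
Set Implicit Arguments.
Unset Strict Implicit.
Import ListNotations.

Lemma nat_min_spec (P : nat -> Prop) : (exists n, P n) ->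
  P (nat_min P) /\ forall m, P m -> nat_min P <= m.
Proof.
  intros HP. apply (epsilon_spec (inhabits 0) (fun n => P n /\ forall m, P m -> n <= m)).
  destruct (dec_inh_nat_subset_has_unique_least_element P (fun n => classic (P n)) HP)
    as [n [Hn _]].
  now exists n.
Qed.

Lemma sum_nat_ext (f g : nat -> nat) n :
  (forall i, i < n -> f i = g i) -> sum_nat f n = sum_nat g n.
Proof.
  induction n as [|n IH]; intros H; simpl; [reflexivity|].
  rewrite IH, H; auto with arith.
Qed.

Lemma sum_nat_le (f g : nat -> nat) n :
  (forall i, i < n -> f i <= g i) -> sum_nat f n <= sum_nat g n.
Proof.
  induction n as [|n IH]; intros H; simpl; [lia|].
  specialize (IH (fun i Hi => H i (Nat.lt_lt_succ_r _ _ Hi))). specialize (H n). lia.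
Qed.

Lemma sum_nat_add (f g : nat -> nat) n :
  sum_nat (fun i => f i + g i) n = sum_nat f n + sum_nat g n.
Proof. induction n; simpl; lia. Qed.

Lemma sum_nat_mul_l c (f : nat -> nat) n :
  sum_nat (fun i => c * f i) n = c * sum_nat f n.
Proof. induction n as [|n IH]; simpl; [lia|]. rewrite IH. lia. Qed.

Lemma sum_nat_zero (f : nat -> nat) n : (forall i, i < n -> f i = 0) -> sum_nat f n = 0.
Proof.
  induction n as [|n IH]; intros H; simpl; [reflexivity|].
  rewrite IH, H; [reflexivity | lia | intros i Hi; apply H; lia].
Qed.

Lemma sum_nat_ge_term (f : nat -> nat) n j : j < n -> f j <= sum_nat f n.
Proof.
  induction n as [|n IH]; intros Hj; simpl; [lia|].
  destruct (Nat.eq_dec j n) as [->|Hne]; [lia|]. specialize (IH ltac:(lia)). lia.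
Qed.

Lemma sum_nat_le_single (f : nat -> nat) n j :
  (forall i, i <> j -> f i = 0) -> sum_nat f n <= f j.
Proof.
  induction n as [|n IH]; intros H; simpl; [lia|].
  destruct (Nat.eq_dec n j) as [->|Hne].
  - rewrite sum_nat_zero by (intros i Hi; apply H; lia). lia.
  - rewrite H by exact Hne. specialize (IH H). lia.
Qed.

Lemma sum_nat_le_unique (f : nat -> nat) n c :
  (forall i k, f i <> 0 -> f k <> 0 -> i = k) -> (forall i, f i <= c) -> sum_nat f n <= c.
Proof.
  intros Huniq Hc. destruct (classic (exists j, f j <> 0)) as [[j Hj]|Hnone].
  - specialize (Hc j). enough (sum_nat f n <= f j) by lia.
    apply sum_nat_le_single. intros i Hi.
    destruct (Nat.eq_dec (f i) 0) as [E|E]; [exact E|].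
    exfalso. exact (Hi (Huniq i j E Hj)).
  - rewrite sum_nat_zero; [lia|]. intros i _.
    destruct (Nat.eq_dec (f i) 0) as [E|E]; [exact E|]. exfalso. eauto.
Qed.

Lemma sum_nat_update (f f' : nat -> nat) n j :
  j < n -> (forall i, i <> j -> f' i = f i) -> sum_nat f' n + f j = sum_nat f n + f' j.
Proof.
  induction n as [|n IH]; intros Hj H; simpl; [lia|].
  destruct (Nat.eq_dec n j) as [->|Hne].
  - rewrite (sum_nat_ext (f := f') (g := f)) by (intros i Hi; apply H; lia). lia.
  - rewrite H by exact Hne. specialize (IH ltac:(lia) H). lia.
Qed.

Lemma sum_nat_succ_l (f : nat -> nat) n :
  sum_nat f (S n) = f 0 + sum_nat (fun i => f (S i)) n.
Proof. induction n as [|n IH]; simpl in *; lia. Qed.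

Lemma sum_nat_tail (f : nat -> nat) m n :
  m <= n -> (forall i, m <= i -> i < n -> f i = 0) -> sum_nat f n = sum_nat f m.
Proof.
  induction n as [|n IH]; intros Hmn H.
  - now replace m with 0 by lia.
  - destruct (Nat.eq_dec m (S n)) as [->|Hne]; [reflexivity|].
    simpl. rewrite IH, H by (lia || (intros; apply H; lia)). lia.
Qed.

(** * Distances in layered graphs *)

Section Layered.
Variables (D : nat) (G : layered_graph D).
Local Notation V := (node G).
Local Notation ly := (layer G).

Lemma layer_src : ly (src G) = 0.
Proof. now apply (layer0 G). Qed.

Lemma layer_pos x : x <> src G -> 1 <= ly x.
Proof. intros Hx. destruct (ly x) eqn:E; [|lia]. now apply (layer0 G) in E. Qed.

Lemma walk_app u v w m n : walk G u v m -> walk G v w n -> walk G u w (m + n).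
Proof. induction 1; intros; simpl; [assumption|]. econstructor; eauto. Qed.

Lemma walk_sym u v n : walk G u v n -> walk G v u n.
Proof.
  induction 1 as [|u w v n Huw _ IH]; [constructor|].
  rewrite <- Nat.add_1_r. apply (walk_app IH).
  econstructor; [apply adj_sym, Huw | constructor].
Qed.

Lemma walk_layer u v n : walk G u v n -> ly v <= ly u + n /\ ly u <= ly v + n.
Proof. induction 1 as [|u w v n Huw]; [lia|]. pose proof (adj_layer G _ _ Huw). lia. Qed.

Lemma walk_to_src v : walk G v (src G) (ly v).
Proof.
  remember (ly v) as k eqn:Hk. revert v Hk.
  induction k as [|k IH]; intros v Hk.
  - replace v with (src G) by (symmetry; apply (layer0 G); auto). constructor.
  - assert (Hv : v <> src G) by (intros ->; rewrite layer_src in Hk; discriminate).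
    destruct (has_parent G Hv) as [u [Huv Hu]].
    econstructor; [apply adj_sym, Huv | apply IH; lia].
Qed.

Lemma walk_exists u v : exists n, walk G u v n.
Proof.
  exists (ly u + ly v). eapply walk_app; [apply walk_to_src | apply walk_sym, walk_to_src].
Qed.

Lemma dist_walk u v : walk G u v (dist G u v).
Proof. apply (nat_min_spec (walk_exists u v)). Qed.

Lemma dist_le_walk u v n : walk G u v n -> dist G u v <= n.
Proof. apply (nat_min_spec (walk_exists u v)). Qed.

Lemma dist_refl u : dist G u u = 0.
Proof. pose proof (dist_le_walk (walk0 G u)). lia. Qed.

Lemma dist_triangle u v w : dist G u w <= dist G u v + dist G v w.
Proof. apply dist_le_walk, (walk_app (dist_walk u v) (dist_walk v w)). Qed.

Lemma dist_layer u v : ly v <= ly u + dist G u v /\ ly u <= ly v + dist G u v.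
Proof. apply walk_layer, dist_walk. Qed.

Lemma dist_src v : dist G (src G) v = ly v.
Proof.
  pose proof (dist_le_walk (walk_sym (walk_to_src v))).
  pose proof (dist_layer (src G) v). rewrite layer_src in *. lia.
Qed.

Lemma dist_pos u v : u <> v -> 1 <= dist G u v.
Proof.
  intros Huv. pose proof (dist_walk u v) as W.
  destruct (dist G u v); [inversion W; congruence | lia].
Qed.

Lemma dist_adj u v : adj G u v -> u <> v -> dist G u v = 1.
Proof.
  intros Huv Hne. pose proof (dist_pos Hne).
  enough (dist G u v <= 1) by lia.
  apply dist_le_walk. econstructor; [exact Huv | constructor].
Qed.

Lemma dist1_layer u v : dist G u v = 1 -> ly v = S (ly u) \/ ly u = S (ly v).
Proof.
  intros H1. pose proof (dist_walk u v) as W. rewrite H1 in W.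
  inversion W as [|? w ? ? Huw Hw]; subst. inversion Hw; subst. now apply adj_layer.
Qed.

Lemma layer_add_le_dist u v : u <> v -> ly u + ly v <= (2 * D - 1) * dist G u v.
Proof.
  intros Huv. pose proof (dist_pos Huv). pose proof (layer_le G u). pose proof (layer_le G v).
  destruct (Nat.eq_dec (dist G u v) 1) as [E|E].
  - rewrite E. pose proof (dist1_layer E). lia.
  - nia.
Qed.

Lemma out_walk_dist u v : out_walk G u v -> ly u <= ly v /\ dist G u v <= ly v - ly u.
Proof.
  intros H. enough (ly u <= ly v /\ walk G u v (ly v - ly u)) as [Hle W]
    by (split; [exact Hle | exact (dist_le_walk W)]).
  induction H as [u|u w v Huw Hl _ [Hle W]].
  - rewrite Nat.sub_diag. split; constructor.
  - split; [lia|]. replace (ly v - ly u) with (S (ly v - ly w)) by lia. econstructor; eauto.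
Qed.

Lemma out_walk_layer_lt u v : out_walk G u v -> u <> v -> ly u < ly v.
Proof.
  intros H Huv. pose proof (out_walk_dist H) as [Hle Hd].
  pose proof (dist_pos Huv). lia.
Qed.

Lemma out_walk_last_edge u v : out_walk G u v ->
  u = v \/ exists w, out_walk G u w /\ adj G w v /\ ly v = S (ly w).
Proof.
  induction 1 as [u|u w v Huw Hl Hwv IH]; [now left|right].
  destruct IH as [<-|[x [Hwx [Hxv Hlx]]]].
  - exists u. split; [constructor | auto].
  - exists x. split; [econstructor; eauto | auto].
Qed.

End Layered.

Section Configurations.
Variables (D : nat) (G : layered_graph D).
Local Notation V := (node G).
Implicit Types (L M C : config G).

Lemma pos_beyond L i : length L <= i -> pos L i = src G.
Proof. apply nth_overflow. Qed.

Lemma served_src L : served L (src G).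
Proof. exists (length L). now apply pos_beyond. Qed.

Lemma move_cost_eq_sum L M N : length L <= N -> length M <= N ->
  move_cost L M = sum_nat (fun i => dist G (pos L i) (pos M i)) N.
Proof.
  intros HL HM. symmetry. apply sum_nat_tail; [lia|].
  intros i Hi _. rewrite !pos_beyond by lia. apply dist_refl.
Qed.

Lemma dist_le_move_cost L M j : dist G (pos L j) (pos M j) <= move_cost L M.
Proof.
  destruct (Nat.lt_ge_cases j (Nat.max (length L) (length M))) as [Hj|Hj].
  - exact (sum_nat_ge_term (fun i => dist G (pos L i) (pos M i)) Hj).
  - rewrite !pos_beyond, dist_refl by lia. lia.
Qed.

Lemma move_cost_le_single L M j : (forall i, i <> j -> pos M i = pos L i) ->
  move_cost L M <= dist G (pos L j) (pos M j).
Proof.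
  intros H. apply (sum_nat_le_single (f := fun i => dist G (pos L i) (pos M i))).
  intros i Hi. rewrite H by exact Hi. apply dist_refl.
Qed.

Lemma move_cost_unchanged L M : (forall i, pos M i = pos L i) -> move_cost L M = 0.
Proof. intros H. apply sum_nat_zero. intros i _. rewrite H. apply dist_refl. Qed.

Lemma move_cost_pair (u v u' v' : V) :
  move_cost [u; v] [u'; v'] = dist G u u' + dist G v v'.
Proof. reflexivity. Qed.

Lemma served_after_move L M j z : (forall i, i <> j -> pos M i = pos L i) ->
  served L z -> z <> pos L j -> served M z.
Proof.
  intros H [i <-] Hz. exists i. apply H. intros ->. exact (Hz eq_refl).
Qed.

Definition outward_step L M (r : V) : Prop :=
  (served L r -> forall i, pos M i = pos L i) /\
  (~ served L r -> exists j, pos M j = r /\ (forall i, i <> j -> pos M i = pos L i) /\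
                             out_walk G (pos L j) r).

End Configurations.

(** * The potential *)

Definition update {T : Type} (f : nat -> T) (j : nat) (x : T) : nat -> T :=
  fun i => if Nat.eqb i j then x else f i.

Lemma update_eq {T : Type} (f : nat -> T) j x : update f j x j = x.
Proof. unfold update. now rewrite Nat.eqb_refl. Qed.

Lemma update_neq {T : Type} (f : nat -> T) j x i : i <> j -> update f j x i = f i.
Proof. intros H. unfold update. now rewrite (proj2 (Nat.eqb_neq i j) H). Qed.

(* Every offline server [i] carries an anchor [a i], the last request it served, and a flag
   [g i] recording that the online server which went to that anchor has left it again.
   While unflagged, anchors are occupied by distinct online servers. *)
Section Potential.
Variables (D : nat) (G : layered_graph D).
Hypothesis HD : 2 <= D.
Local Notation V := (node G).
Local Notation ly := (layer G).
Implicit Types (L M C : config G) (a : nat -> V) (g : nat -> bool).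

Definition anchor_weight (x : V) : nat := if Nat.eqb (ly x) 0 then 0 else 2 * D - 2 - ly x.

Definition server_potential (x : V) (flag : bool) (p : V) : nat :=
  anchor_weight x + (2 * D - 1) * dist G x p + (if flag then 2 * ly x else 0).

Definition potential (N : nat) C a g : nat :=
  sum_nat (fun i => server_potential (a i) (g i) (pos C i)) N.

Definition unflagged_served L a g : Prop :=
  forall i, g i = false -> a i <> src G -> served L (a i).

Definition unflagged_distinct a g : Prop :=
  forall i k, g i = false -> g k = false -> a i = a k -> a i <> src G -> i = k.

Definition vacate (q : V) a g : nat -> bool :=
  fun i => if excluded_middle_informative (a i = q /\ q <> src G) then true else g i.

Lemma anchor_weight_src : anchor_weight (src G) = 0.
Proof. unfold anchor_weight. now rewrite layer_src. Qed.

Lemma anchor_weight_nonsrc x : x <> src G -> anchor_weight x = 2 * D - 2 - ly x.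
Proof. intros Hx. unfold anchor_weight. pose proof (layer_pos Hx). now destruct (ly x). Qed.

Lemma server_potential_home x : server_potential x false x = anchor_weight x.
Proof. unfold server_potential. rewrite dist_refl. lia. Qed.

Lemma server_potential_move x flag p p' :
  server_potential x flag p' <= server_potential x flag p + (2 * D - 1) * dist G p p'.
Proof. unfold server_potential. pose proof (dist_triangle x p p'). nia. Qed.

Lemma potential_offline_move N Cp Cn a g : length Cp <= N -> length Cn <= N ->
  potential N Cn a g <= potential N Cp a g + (2 * D - 1) * move_cost Cp Cn.
Proof.
  intros Hp Hn. unfold potential.
  rewrite (move_cost_eq_sum Hp Hn), <- sum_nat_mul_l, <- sum_nat_add.
  apply sum_nat_le. intros i _. apply server_potential_move.
Qed.

(* The weight [2D - 2 - layer x] is what makes the three cases (anchor at the source, at [r],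
   elsewhere) go through with the factor [2D - 1]. *)
Lemma anchor_request_bound x flag r : r <> src G -> (x = r -> flag = true) ->
  anchor_weight r + 2 * ly r <= server_potential x flag r.
Proof.
  intros Hr Hflag. pose proof (layer_pos Hr). pose proof (layer_le G r).
  unfold server_potential. rewrite (anchor_weight_nonsrc Hr).
  destruct (classic (x = src G)) as [->|Hx]; [|destruct (classic (x = r)) as [->|Hxr]].
  - rewrite anchor_weight_src, layer_src, dist_src.
    replace (2 * D - 1) with (S (2 * D - 2)) by lia. set (t := 2 * D - 2).
    assert (t <= t * ly r /\ ly r <= t * ly r) by (unfold t; nia).
    simpl. destruct flag; lia.
  - rewrite (Hflag eq_refl), dist_refl, (anchor_weight_nonsrc Hr). lia.
  - pose proof (layer_pos Hx). pose proof (layer_le G x). pose proof (layer_add_le_dist Hxr).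
    rewrite (anchor_weight_nonsrc Hx). destruct flag; lia.
Qed.

Lemma vacate_flagged q a g i : g i = true -> vacate q a g i = true.
Proof. intros H. unfold vacate. now destruct excluded_middle_informative. Qed.

Lemma vacate_unflagged q a g i : vacate q a g i = false -> g i = false /\ (a i = q -> q = src G).
Proof.
  unfold vacate. destruct excluded_middle_informative as [|Hn]; [discriminate|].
  intros Hg. split; [exact Hg|]. intros Hq. apply NNPP. tauto.
Qed.

Lemma potential_vacate N C q a g : unflagged_distinct a g ->
  potential N C a (vacate q a g) <= potential N C a g + 2 * ly q.
Proof.
  intros Hdist.
  set (bonus := fun i => if g i then 0 else
                  if excluded_middle_informative (a i = q /\ q <> src G) then 2 * ly q else 0).
  assert (Hbonus : sum_nat bonus N <= 2 * ly q).
  { apply sum_nat_le_unique; [|intros i; unfold bonus; destruct (g i); [lia|];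
                              destruct excluded_middle_informative; lia].
    intros i k. unfold bonus.
    destruct (g i) eqn:Hgi; [tauto|]. destruct (g k) eqn:Hgk; [tauto|].
    destruct excluded_middle_informative as [[Hi Hq]|]; [|tauto].
    destruct excluded_middle_informative as [[Hk _]|]; [|tauto].
    intros _ _. apply Hdist; congruence. }
  enough (potential N C a (vacate q a g) <= potential N C a g + sum_nat bonus N) by lia.
  unfold potential. rewrite <- sum_nat_add. apply sum_nat_le. intros i _.
  unfold vacate, bonus, server_potential.
  destruct excluded_middle_informative as [[-> _]|]; destruct (g i); lia.
Qed.

Lemma potential_reanchor N C a g j r : j < N -> pos C j = r -> r <> src G ->
  (a j = r -> g j = true) ->
  potential N C (update a j r) (update g j false) + 2 * ly r <= potential N C a g.
Proof.
  intros Hj HCj Hr Hflag.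
  pose proof (anchor_request_bound Hr Hflag) as Hbound.
  pose proof (@sum_nat_update
    (fun i => server_potential (a i) (g i) (pos C i))
    (fun i => server_potential (update a j r i) (update g j false i) (pos C i)) N j Hj) as Hupd.
  cbv beta in Hupd. rewrite !update_eq, HCj in Hupd.
  rewrite server_potential_home in Hupd.
  unfold potential. enough (H : forall i, i <> j ->
    server_potential (update a j r i) (update g j false i) (pos C i)
    = server_potential (a i) (g i) (pos C i)) by (specialize (Hupd H); lia).
  intros i Hi. now rewrite !update_neq by exact Hi.
Qed.

Lemma unflagged_served_reanchor L M a g j j0 r :
  unflagged_served L a g -> (forall i, i <> j -> pos M i = pos L i) -> pos M j = r ->
  unflagged_served M (update a j0 r) (update (vacate (pos L j) a g) j0 false).
Proof.
  intros Hserved Hothers Hj i Hg Ha. destruct (Nat.eq_dec i j0) as [->|Hi].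
  - rewrite update_eq. now exists j.
  - rewrite update_neq in Hg by exact Hi. rewrite update_neq in Ha |- * by exact Hi.
    destruct (vacate_unflagged Hg) as [Hg' Hq].
    apply (served_after_move Hothers (Hserved i Hg' Ha)).
    intros E. apply Ha. rewrite E. exact (Hq E).
Qed.

Lemma unflagged_distinct_reanchor L a g q j0 r :
  unflagged_served L a g -> unflagged_distinct a g -> ~ served L r ->
  unflagged_distinct (update a j0 r) (update (vacate q a g) j0 false).
Proof.
  intros Hserved Hdistinct Hr.
  assert (Hfresh : forall k, k <> j0 -> update (vacate q a g) j0 false k = false ->
                   r = update a j0 r k -> r <> src G -> False).
  { intros k Hk. rewrite !update_neq by exact Hk. intros Hg -> Ha.
    exact (Hr (Hserved k (proj1 (vacate_unflagged Hg)) Ha)). }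
  intros i k Hgi Hgk Haik Ha.
  destruct (Nat.eq_dec i j0) as [->|Hi]; destruct (Nat.eq_dec k j0) as [->|Hk]; auto.
  - rewrite update_eq in Haik, Ha. exfalso. exact (Hfresh k Hk Hgk Haik Ha).
  - rewrite update_eq in Haik. rewrite Haik in Ha. exfalso.
    exact (Hfresh i Hi Hgi (eq_sym Haik) Ha).
  - rewrite update_neq in Hgi by exact Hi. rewrite update_neq in Hgk by exact Hk.
    rewrite !update_neq in Haik by assumption. rewrite update_neq in Ha by exact Hi.
    exact (Hdistinct i k (proj1 (vacate_unflagged Hgi)) (proj1 (vacate_unflagged Hgk)) Haik Ha).
Qed.

Lemma potential_step N L M Cp Cn r a g :
  outward_step L M r -> length Cp <= N -> length Cn <= N -> served Cn r ->
  unflagged_served L a g -> unflagged_distinct a g ->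
  exists a' g', unflagged_served M a' g' /\ unflagged_distinct a' g' /\
    2 * move_cost L M + potential N Cn a' g' <= potential N Cp a g + (2 * D - 1) * move_cost Cp Cn.
Proof.
  intros [Hlazy Hmove] HCp HCn [j0 Hj0] Hserved Hdistinct.
  pose proof (potential_offline_move a g HCp HCn) as Hoffline.
  destruct (classic (served L r)) as [Hr|Hr].
  - exists a, g. rewrite (move_cost_unchanged (Hlazy Hr)). split; [|split; [exact Hdistinct | lia]].
    intros i Hg Ha. destruct (Hserved i Hg Ha) as [k Hk]. exists k. now rewrite Hlazy.
  - destruct (Hmove Hr) as [j [Hj [Hothers Hout]]].
    assert (Hrsrc : r <> src G) by (intros ->; exact (Hr (served_src L))).
    assert (Hj0N : j0 < N).
    { destruct (Nat.lt_ge_cases j0 (length Cn)) as [|Hge]; [lia|].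
      rewrite pos_beyond in Hj0 by exact Hge. congruence. }
    assert (Hflag : a j0 = r -> vacate (pos L j) a g j0 = true).
    { intros Ha. apply vacate_flagged. destruct (g j0) eqn:Hg; [reflexivity|].
      exfalso. apply Hr. rewrite <- Ha. apply Hserved; congruence. }
    exists (update a j0 r), (update (vacate (pos L j) a g) j0 false). split; [|split].
    + exact (unflagged_served_reanchor Hserved Hothers Hj).
    + exact (unflagged_distinct_reanchor Hserved Hdistinct Hr).
    + pose proof (potential_reanchor Hj0N Hj0 Hrsrc Hflag).
      pose proof (potential_vacate N Cn (pos L j) Hdistinct).
      pose proof (move_cost_le_single Hothers) as Hcost. rewrite Hj in Hcost.
      pose proof (out_walk_dist Hout). lia.
Qed.

Lemma outward_run_cost (Ls Cs : nat -> config G) (r : nat -> V) m N :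
  initial (Cs 0) -> (forall t, t <= m -> length (Cs t) <= N) ->
  (forall t, t < m -> outward_step (Ls t) (Ls (S t)) (r t) /\ served (Cs (S t)) (r t)) ->
  2 * sum_nat (fun t => move_cost (Ls t) (Ls (S t))) m
    <= (2 * D - 1) * sum_nat (fun t => move_cost (Cs t) (Cs (S t))) m.
Proof.
  intros Hinit Hlen Hsteps.
  enough (exists a g, unflagged_served (Ls m) a g /\ unflagged_distinct a g /\
            2 * sum_nat (fun t => move_cost (Ls t) (Ls (S t))) m + potential N (Cs m) a g
              <= (2 * D - 1) * sum_nat (fun t => move_cost (Cs t) (Cs (S t))) m)
    as [a [g [_ [_ Hbound]]]] by lia.
  induction m as [|m IH].
  - exists (fun _ => src G), (fun _ => false).
    split; [intros i _ Ha; now contradiction Ha|].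
    split; [intros i k _ _ _ Ha; now contradiction Ha|].
    simpl. unfold potential. rewrite sum_nat_zero; [lia|].
    intros i _. rewrite Hinit, server_potential_home. apply anchor_weight_src.
  - destruct IH as [a [g [Hs [Hd Hbound]]]];
      [intros t Ht; apply Hlen; lia | intros t Ht; apply Hsteps; lia |].
    destruct (Hsteps m (Nat.lt_succ_diag_r m)) as [Hstep Hserve].
    destruct (potential_step Hstep (Hlen m (Nat.le_succ_diag_r m)) (Hlen (S m) (le_n _))
                Hserve Hs Hd) as [a' [g' [Hs' [Hd' Hbound']]]].
    exists a', g'. split; [exact Hs'|]. split; [exact Hd'|].
    simpl. rewrite Nat.mul_add_distr_l. lia.
Qed.

End Potential.

Lemma firstn_S_nth {T : Type} (s : list T) t d :
  t < length s -> firstn (S t) s = firstn t s ++ [nth t s d].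
Proof.
  revert t. induction s as [|x s IH]; intros t Ht; simpl in Ht; [lia|].
  destruct t as [|t]; [reflexivity|]. rewrite firstn_cons, (IH t) by lia. reflexivity.
Qed.

Lemma last_cons_default {T : Type} (x d : T) l : last (x :: l) d = last l x.
Proof.
  revert x d. induction l as [|y l IH]; intros x d; [reflexivity|].
  change (last (y :: l) d = last (y :: l) x). now rewrite !IH.
Qed.

Lemma Forall2_nth {A B : Type} (R : A -> B -> Prop) l l' d d' t :
  Forall2 R l l' -> t < length l -> R (nth t l d) (nth t l' d').
Proof.
  intros H. revert t. induction H as [|x y l l' Hxy _ IH]; intros t Ht; simpl in Ht; [lia|].
  destruct t; [exact Hxy | apply IH; lia].
Qed.

Section Schedules.
Variables (D : nat) (G : layered_graph D).
Local Notation V := (node G).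
Implicit Types (s : list V) (C : config G).

Lemma initial_nil : initial (@nil V).
Proof. intros [|i]; reflexivity. Qed.

Lemma valid_schedule_firstn s : valid_schedule s (fun t => firstn t s).
Proof.
  split; [exact initial_nil|]. intros t Ht. exists t.
  unfold pos. cbv beta. rewrite nth_firstn.
  now rewrite (proj2 (Nat.ltb_lt t (S t)) (Nat.lt_succ_diag_r t)).
Qed.

Lemma OPT_spec s : exists Cs, valid_schedule s Cs /\ sched_cost s Cs = OPT G s.
Proof.
  destruct (nat_min_spec (P := fun n => exists Cs, valid_schedule s Cs /\ sched_cost s Cs = n))
    as [H _]; [|exact H].
  exists (sched_cost s (fun t => firstn t s)), (fun t => firstn t s).
  split; [apply valid_schedule_firstn | reflexivity].
Qed.

Lemma OPT_le s (Cs : nat -> config G) : valid_schedule s Cs -> OPT G s <= sched_cost s Cs.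
Proof.
  intros HCs.
  apply (nat_min_spec (P := fun n => exists Cs, valid_schedule s Cs /\ sched_cost s Cs = n)).
  - now exists (sched_cost s Cs), Cs.
  - now exists Cs.
Qed.

Fixpoint path_cost C (cs : list (config G)) : nat :=
  match cs with
  | [] => 0
  | C' :: cs' => move_cost C C' + path_cost C' cs'
  end.

Lemma path_cost_app C cs cs' : path_cost C (cs ++ cs') = path_cost C cs + path_cost (last cs C) cs'.
Proof.
  revert C. induction cs as [|C1 cs IH]; intros C; [reflexivity|].
  replace (last (C1 :: cs) C) with (last cs C1) by (symmetry; apply last_cons_default).
  cbn [path_cost app]. rewrite IH. lia.
Qed.

Lemma sched_cost_path_cost s C cs : length cs = length s ->
  sched_cost s (fun t => nth t (C :: cs) []) = path_cost C cs.
Proof.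
  revert s C. induction cs as [|C1 cs IH]; intros [|r s] C Hlen; simpl in Hlen; try discriminate.
  - reflexivity.
  - unfold sched_cost in *. simpl length. rewrite sum_nat_succ_l. simpl.
    f_equal. apply (IH s C1). lia.
Qed.

Lemma OPT_le_path_cost s cs : Forall2 (@served D G) cs s -> OPT G s <= path_cost [] cs.
Proof.
  intros Hserve. pose proof (Forall2_length Hserve) as Hlen.
  rewrite <- (sched_cost_path_cost [] Hlen). apply OPT_le.
  split; [exact initial_nil|]. intros t Ht. apply (Forall2_nth [] (src G) Hserve).
  rewrite <- Hlen in Ht. exact Ht.
Qed.

End Schedules.

Section OnlineRuns.
Variables (D : nat) (G : layered_graph D) (A : online_alg G).
Local Notation V := (node G).
Implicit Types (s : list V).

Lemma alg_cost_snoc s r :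
  alg_cost A (s ++ [r]) = alg_cost A s + move_cost (conf A s) (conf A (s ++ [r])).
Proof.
  unfold alg_cost. rewrite length_app, Nat.add_1_r. cbn [sum_nat].
  rewrite (firstn_all2 (n := S (length s))) by (rewrite length_app; simpl; lia).
  rewrite firstn_app, Nat.sub_diag, firstn_all, app_nil_r.
  f_equal. apply sum_nat_ext. intros t Ht.
  rewrite !firstn_app. replace (t - length s) with 0 by lia. replace (S t - length s) with 0 by lia.
  now rewrite !app_nil_r.
Qed.

Hypothesis HA : MOO A.

Lemma moo_outward_step s r : outward_step (conf A s) (conf A (s ++ [r])) r.
Proof.
  destruct (HA s r) as [Hlazy Hmove]. split; [exact Hlazy|].
  intros Hr. destruct (Hmove Hr) as [j [Hj [Hothers [_ Hout]]]]. now exists j.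
Qed.

Lemma moo_served_requested s z : served (conf A s) z -> z = src G \/ In z s.
Proof.
  revert z. induction s as [|r s IH] using rev_ind; intros z [i <-].
  - left. apply conf_init.
  - rewrite in_app_iff. destruct (HA s r) as [Hlazy Hmove].
    destruct (classic (served (conf A s) r)) as [Hr|Hr].
    + rewrite (Hlazy Hr). destruct (IH _ (ex_intro _ i eq_refl)); tauto.
    + destruct (Hmove Hr) as [j [Hj [Hothers _]]]. destruct (Nat.eq_dec i j) as [->|Hij].
      * rewrite Hj. simpl. tauto.
      * rewrite (Hothers i Hij). destruct (IH _ (ex_intro _ i eq_refl)); tauto.
Qed.

Lemma moo_unrequested s z : z <> src G -> ~ In z s -> ~ served (conf A s) z.
Proof. intros Hz Hin Hs. destruct (moo_served_requested Hs); contradiction. Qed.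

Lemma moo_positions_inj s i k :
  pos (conf A s) i = pos (conf A s) k -> pos (conf A s) i <> src G -> i = k.
Proof.
  induction s as [|r s IH] using rev_ind; intros Hik Hi.
  - exfalso. apply Hi, conf_init.
  - destruct (HA s r) as [Hlazy Hmove].
    destruct (classic (served (conf A s) r)) as [Hr|Hr].
    + rewrite !(Hlazy Hr) in *. now apply IH.
    + destruct (Hmove Hr) as [j [Hj [Hothers _]]].
      assert (Hfresh : forall m, m <> j -> pos (conf A (s ++ [r])) m <> r).
      { intros m Hm E. apply Hr. exists m. now rewrite <- (Hothers m Hm). }
      destruct (Nat.eq_dec i j) as [Hij|Hij]; destruct (Nat.eq_dec k j) as [Hkj|Hkj].
      * congruence.
      * subst i. exfalso. apply (Hfresh k Hkj). congruence.
      * subst k. exfalso. apply (Hfresh i Hij). congruence.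
      * rewrite (Hothers i Hij), (Hothers k Hkj) in Hik. rewrite (Hothers i Hij) in Hi.
        exact (IH Hik Hi).
Qed.

Lemma moo_move s r : ~ served (conf A s) r ->
  exists q, served (conf A s) q /\ q <> r /\ out_walk G q r /\
    (forall c, c <> q -> c <> r -> dist G q r = dist G q c + dist G c r -> ~ served (conf A s) c) /\
    dist G q r <= move_cost (conf A s) (conf A (s ++ [r])) /\
    (forall z, served (conf A s) z -> z <> q -> served (conf A (s ++ [r])) z) /\
    (q <> src G -> ~ served (conf A (s ++ [r])) q).
Proof.
  intros Hr. destruct (proj2 (HA s r) Hr) as [j [Hj [Hothers [Hlocal Hout]]]].
  exists (pos (conf A s) j). split; [now exists j|].
  split; [intros E; apply Hr; now exists j|].
  split; [exact Hout|]. split; [exact Hlocal|].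
  split; [pose proof (dist_le_move_cost (conf A s) (conf A (s ++ [r])) j) as Hc;
          now rewrite Hj in Hc|].
  split; [intros z Hz Hzq; exact (served_after_move Hothers Hz Hzq)|].
  intros Hq [i Hi]. destruct (Nat.eq_dec i j) as [->|Hij].
  - apply Hr. exists j. congruence.
  - rewrite (Hothers i Hij) in Hi.
    apply Hij, (moo_positions_inj Hi). now rewrite Hi.
Qed.

End OnlineRuns.

(** * Competitive ratio *)

Section UpperBound.
Variables (D : nat) (G : layered_graph D) (A : online_alg G).
Hypotheses (HD : 2 <= D) (HA : MOO A).

Lemma moo_cost_le_OPT s : 2 * alg_cost A s <= (2 * D - 1) * OPT G s.
Proof.
  destruct (OPT_spec s) as [Cs [[Hinit Hserve] <-]].
  apply (outward_run_cost HD (Ls := fun t => conf A (firstn t s)) (r := fun t => nth t s (src G))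
           (N := sum_nat (fun t => length (Cs t)) (S (length s))) Hinit).
  - intros t Ht. apply (sum_nat_ge_term (fun t => length (Cs t))). lia.
  - intros t Ht. rewrite (firstn_S_nth (src G) Ht).
    split; [apply (moo_outward_step HA) | exact (Hserve t Ht)].
Qed.

Lemma moo_competitive : competitive A (INR D - 1/2).
Proof.
  exists 0%R. intros s. pose proof (moo_cost_le_OPT s) as H.
  assert (Hnat : 2 * alg_cost A s + OPT G s <= 2 * D * OPT G s) by nia.
  apply le_INR in Hnat. rewrite plus_INR, !mult_INR in Hnat. simpl in Hnat. lra.
Qed.

End UpperBound.

Section Competitiveness.
Variables (D : nat) (G : layered_graph D) (A : online_alg G).

Lemma competitive_mono rho rho' : (rho <= rho')%R -> competitive A rho -> competitive A rho'.
Proof.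
  intros Hle [c Hc]. exists c. intros s. specialize (Hc s).
  pose proof (pos_INR (OPT G s)). nra.
Qed.

Lemma not_competitive_of_lower_bound (a b K : nat) rho : 0 < a -> (rho * INR b < INR a)%R ->
  (forall k, exists s, a * k <= alg_cost A s /\ OPT G s <= b * k + K) -> ~ competitive A rho.
Proof.
  intros Ha Hrho Hseq Hcomp.
  set (rp := Rmax rho 0).
  destruct (competitive_mono (Rmax_l rho 0) Hcomp) as [c Hc]. fold rp in Hc.
  assert (Hrp : (0 <= rp)%R) by apply Rmax_r.
  assert (Hgap : (0 < INR a - rp * INR b)%R).
  { apply lt_0_INR in Ha. unfold rp, Rmax. destruct Rle_dec; lra. }
  destruct (INR_archimed _ (rp * INR K + c) Hgap) as [k Hk].
  destruct (Hseq k) as [s [Halg Hopt]]. specialize (Hc s).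
  apply le_INR in Halg, Hopt. rewrite mult_INR in Halg. rewrite plus_INR, mult_INR in Hopt.
  assert (rp * INR (OPT G s) <= rp * (INR b * INR k + INR K))%R
    by (apply Rmult_le_compat_l; assumption).
  nra.
Qed.

End Competitiveness.

(** * The adversary *)

Inductive adv_node : Type := Root | Chain (k : nat) | Hub (n : nat) | Tip (a b c : nat).

(* Chain nodes lead from [Root] up to layer [D - 2]; those with [k >= D - 3] are copies of the
   topmost one.  Hubs form layer [D - 1] and [Tip a b c] is the common child of three hubs. *)
Definition adv_layer (D : nat) (v : adv_node) : nat :=
  match v with
  | Root => 0
  | Chain k => S (Nat.min k (D - 3))
  | Hub _ => D - 1
  | Tip _ _ _ => D
  end.

Definition adv_link (u v : adv_node) : Prop :=
  match u, v with
  | Root, Chain _ | Root, Hub _ | Chain _, Chain _ | Chain _, Hub _ => True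
  | Hub n, Tip a b c => n = a \/ n = b \/ n = c
  | _, _ => False
  end.

Definition adv_edge (D : nat) (u v : adv_node) : Prop :=
  adv_link u v /\ adv_layer D v = S (adv_layer D u).

Definition adv_adj (D : nat) (u v : adv_node) : Prop := adv_edge D u v \/ adv_edge D v u.

Section AdversaryGraph.
Variables (D : nat) (HD : 2 <= D).

Lemma adv_adj_sym u v : adv_adj D u v -> adv_adj D v u.
Proof. unfold adv_adj. tauto. Qed.

Lemma adv_layer_le v : adv_layer D v <= D.
Proof. destruct v; simpl; lia. Qed.

Lemma adv_layer0 v : adv_layer D v = 0 <-> v = Root.
Proof. destruct v; simpl; split; intros; try discriminate; try lia; reflexivity. Qed.

Lemma adv_adj_layer u v :
  adv_adj D u v -> adv_layer D v = S (adv_layer D u) \/ adv_layer D u = S (adv_layer D v).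
Proof. unfold adv_adj, adv_edge. tauto. Qed.

Lemma adv_has_parent v : v <> Root -> exists u, adv_adj D u v /\ S (adv_layer D u) = adv_layer D v.
Proof.
  intros Hv. unfold adv_adj, adv_edge.
  destruct v as [|k|n|a b c]; [congruence| | |].
  - destruct (Nat.min k (D - 3)) as [|m] eqn:Em.
    + exists Root. simpl. rewrite Em. auto.
    + exists (Chain m). simpl. rewrite Em. replace (Nat.min m (D - 3)) with m by lia. auto.
  - destruct (Nat.eq_dec D 2) as [E|E].
    + exists Root. simpl. rewrite E. auto.
    + exists (Chain (D - 3)). simpl. rewrite Nat.min_id. split; [left; split|]; [exact I | lia ..].
  - exists (Hub a). simpl. split; [left; split|]; [auto | lia ..].
Qed.

Definition adv_graph : layered_graph D :=
  {| node := adv_node; adj := adv_adj D; layer := adv_layer D; src := Root;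
     adj_sym := adv_adj_sym; layer_le := adv_layer_le; layer0 := adv_layer0;
     adj_layer := adv_adj_layer; has_parent := adv_has_parent |}.

Local Notation G := adv_graph.

Lemma dist_root_hub m : dist G Root (Hub m) = D - 1.
Proof. exact (dist_src (G := G) (Hub m)). Qed.

Lemma dist_root_tip a b c : dist G Root (Tip a b c) = D.
Proof. exact (dist_src (G := G) (Tip a b c)). Qed.

Lemma hub_tip_adj x a b c : x = a \/ x = b \/ x = c -> adj G (Hub x) (Tip a b c).
Proof. intros H. left. split; [exact H | simpl; lia]. Qed.

Lemma dist_hub_tip x a b c : x = a \/ x = b \/ x = c -> dist G (Hub x) (Tip a b c) = 1.
Proof. intros H. apply dist_adj; [exact (hub_tip_adj H) | discriminate]. Qed.

Lemma dist_tip_hub x a b c : x = a \/ x = b \/ x = c -> dist G (Tip a b c) (Hub x) = 1.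
Proof. intros H. apply dist_adj; [exact (adj_sym _ _ _ (hub_tip_adj H)) | discriminate]. Qed.

Lemma tip_neighbor w a b c : adj G w (Tip a b c) -> w = Hub a \/ w = Hub b \/ w = Hub c.
Proof.
  intros [[Hlink _]|[Hlink _]]; destruct w; simpl in Hlink; try contradiction.
  destruct Hlink as [-> | [-> | ->]]; auto.
Qed.

Lemma offline_phase x y n v : v = x \/ v = y ->
  exists (X1 X2 : config G) x' y',
    Forall2 (@served D G) [X1; X2; [Hub x'; Hub y']] [Tip x y n; Hub v; Hub n] /\
    path_cost (G := G) [Hub x; Hub y] [X1; X2; [Hub x'; Hub y']] <= 2 /\
    (x' = v \/ x' = n) /\ (y' = v \/ y' = n).
Proof.
  assert (Hx : x = x \/ x = y \/ x = n) by auto.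
  assert (Hy : y = x \/ y = y \/ y = n) by auto.
  assert (Hn : n = x \/ n = y \/ n = n) by auto.
  intros [-> | ->].
  - exists [Hub x; Tip x y n], [Hub x; Tip x y n], x, n.
    split; [repeat constructor; [exists 1 | exists 0 | exists 1]; reflexivity|].
    split; [|auto]. simpl.
    rewrite !move_cost_pair, !dist_refl, dist_hub_tip, dist_tip_hub by assumption. lia.
  - exists [Tip x y n; Hub y], [Tip x y n; Hub y], n, y.
    split; [repeat constructor; [exists 0 | exists 1 | exists 0]; reflexivity|].
    split; [|auto]. simpl.
    rewrite !move_cost_pair, !dist_refl, dist_hub_tip, dist_tip_hub by assumption. lia.
Qed.

End AdversaryGraph.

Definition indexed_below (n : nat) (z : adv_node) : Prop :=
  match z with
  | Hub i => i < n
  | Tip _ _ c => c < n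
  | _ => False
  end.

Lemma indexed_below_succ n z : indexed_below n z -> indexed_below (S n) z.
Proof. destruct z; simpl; lia. Qed.

Section Adversary.
Variables (D : nat) (HD : 2 <= D).
Local Notation G := (adv_graph HD).
Variables (A : online_alg G).
Hypothesis HA : MOO A.

Lemma served_indexed s n z :
  Forall (indexed_below n) s -> served (conf A s) z -> z = Root \/ indexed_below n z.
Proof.
  intros Hs Hz. destruct (moo_served_requested HA Hz) as [->|Hin]; [now left|].
  right. exact (proj1 (Forall_forall _ s) Hs z Hin).
Qed.

(* Chains are never requested, hence never occupied: the only occupied node below a hub is
   [Root]. *)
Lemma outward_to_hub s n q i : Forall (indexed_below n) s -> served (conf A s) q ->
  out_walk G q (Hub i) -> q = Hub i \/ q = Root.
Proof.
  intros Hs Hq Hout. destruct (classic (q = Hub i)) as [|Hne]; [now left|right].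
  pose proof (out_walk_layer_lt Hout Hne) as Hlt.
  destruct (served_indexed Hs Hq) as [|Hi]; [assumption|].
  destruct q; simpl in Hi, Hlt; lia.
Qed.

Lemma hub_request s n m : Forall (indexed_below n) s -> ~ served (conf A s) (Hub m) ->
  D - 1 <= move_cost (conf A s) (conf A (s ++ [Hub m])) /\
  (forall z, served (conf A s) z -> z <> Root -> served (conf A (s ++ [Hub m])) z).
Proof.
  intros Hs Hm. destruct (moo_move HA Hm) as [q [Hq [Hqm [Hout [_ [Hcost [Hkeep _]]]]]]].
  destruct (outward_to_hub Hs Hq Hout) as [Heq | ->]; [contradiction|].
  rewrite dist_root_hub in Hcost. split; [exact Hcost | exact Hkeep].
Qed.

Lemma tip_request s n x y : Forall (indexed_below n) s ->
  served (conf A s) (Hub x) -> served (conf A s) (Hub y) ->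
  1 <= move_cost (conf A s) (conf A (s ++ [Tip x y n])) /\
  exists v, (v = x \/ v = y) /\ ~ served (conf A (s ++ [Tip x y n])) (Hub v) /\
    (forall z, served (conf A s) z -> z <> Hub v -> served (conf A (s ++ [Tip x y n])) z).
Proof.
  intros Hs Hx Hy.
  assert (Hfresh : forall z, ~ indexed_below n z -> z <> Root -> ~ served (conf A s) z)
    by (intros z Hz Hroot Hserved; destruct (served_indexed Hs Hserved); contradiction).
  assert (Htip : ~ served (conf A s) (Tip x y n)) by (apply Hfresh; [simpl; lia | discriminate]).
  assert (Hhub : ~ served (conf A s) (Hub n)) by (apply Hfresh; [simpl; lia | discriminate]).
  destruct (moo_move HA Htip) as [q [Hq [Hqt [Hout [Hlocal [Hcost [Hkeep Hvacated]]]]]]].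
  split; [exact (Nat.le_trans _ _ _ (dist_pos Hqt) Hcost)|].
  assert (Hparent : q = Hub x \/ q = Hub y).
  { destruct (out_walk_last_edge Hout) as [|[w [Hqw [Hwt _]]]]; [contradiction|].
    destruct (tip_neighbor Hwt) as [-> | [-> | ->]];
      destruct (outward_to_hub Hs Hq Hqw) as [-> | ->]; auto; try contradiction.
    all: exfalso; apply (Hlocal (Hub x)); [discriminate | discriminate | | exact Hx].
    all: rewrite dist_root_tip, dist_root_hub, dist_hub_tip by auto; lia. }
  destruct Hparent as [-> | ->]; [exists x | exists y];
    (split; [auto | split; [apply Hvacated; discriminate | exact Hkeep]]).
Qed.

Record adversary_state (k : nat) (s : list (node G)) (cs : list (config G)) (x y n : nat) :
  Prop := {
  requests_indexed : Forall (indexed_below n) s;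
  alg_serves_x : served (conf A s) (Hub x);
  alg_serves_y : served (conf A s) (Hub y);
  offline_serves : Forall2 (@served D G) cs s;
  offline_last : last cs [] = [Hub x; Hub y];
  offline_cost : path_cost [] cs <= 2 * k + 2 * D;
  alg_cost_lower : (2 * D - 1) * k <= alg_cost A s
}.

Lemma adversary_start : adversary_state 0 [Hub 0; Hub 1] [[Hub 0]; [Hub 0; Hub 1]] 0 1 2.
Proof.
  assert (Hserved1 := conf_serves A [Hub 0] (Hub 1)).
  assert (Hunserved1 : ~ served (conf A [Hub 0]) (Hub 1))
    by (apply (moo_unrequested HA); [discriminate | intros [E | []]; discriminate]).
  constructor.
  - repeat constructor; simpl; lia.
  - assert (Hs : Forall (indexed_below 1) [Hub 0]) by (repeat constructor; simpl; lia).
    apply (proj2 (hub_request Hs Hunserved1)); [exact (conf_serves A [] (Hub 0)) | discriminate].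
  - exact Hserved1.
  - repeat constructor; [exists 0 | exists 1]; reflexivity.
  - reflexivity.
  - simpl. unfold move_cost, pos. simpl. rewrite !dist_root_hub, !dist_refl. lia.
  - rewrite Nat.mul_0_r. apply Nat.le_0_l.
Qed.

Lemma adversary_phase k s cs x y n : adversary_state k s cs x y n ->
  exists s' cs' x' y', adversary_state (S k) s' cs' x' y' (S n).
Proof.
  intros [Hs Hx Hy Hoff Hlast Hcost Halg].
  assert (Hindexed : forall i, served (conf A s) (Hub i) -> i < n)
    by (intros i Hi; destruct (served_indexed Hs Hi) as [E | Hb]; [discriminate | exact Hb]).
  destruct (tip_request Hs Hx Hy) as [C1 [v [Hv [Hvacated _]]]].
  assert (Hvn : v < n) by (destruct Hv as [-> | ->]; apply Hindexed; assumption).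
  set (s1 := s ++ [Tip x y n]) in *.
  set (s2 := s1 ++ [Hub v]).
  set (s3 := s2 ++ [Hub n]).
  assert (Hs1 : Forall (indexed_below (S n)) s1).
  { apply Forall_app. split; [exact (Forall_impl _ (@indexed_below_succ n) Hs)|].
    repeat constructor; simpl; lia. }
  assert (Hs2 : Forall (indexed_below (S n)) s2)
    by (apply Forall_app; split; [exact Hs1 | repeat constructor; simpl; lia]).
  destruct (hub_request Hs1 Hvacated) as [C2 _].
  assert (Hunserved : ~ served (conf A s2) (Hub n)).
  { apply (moo_unrequested HA); [discriminate|]. unfold s2, s1. rewrite !in_app_iff.
    intros [[Hin | [E | []]] | [E | []]]; [|discriminate | injection E; lia].
    pose proof (proj1 (Forall_forall _ _) Hs _ Hin). simpl in *. lia. }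
  destruct (hub_request Hs2 Hunserved) as [C3 Hkeep3].
  assert (Hserves3 : forall i, i = v \/ i = n -> served (conf A s3) (Hub i)).
  { intros i [-> | ->]; [apply Hkeep3; [apply (conf_serves A s1) | discriminate]|].
    apply (conf_serves A s2). }
  destruct (offline_phase HD n Hv) as [X1 [X2 [x' [y' [Hserve3 [Hcost3 [Hx' Hy']]]]]]].
  exists s3, (cs ++ [X1; X2; [Hub x'; Hub y']]), x', y'. constructor.
  - apply Forall_app. split; [exact Hs2 | repeat constructor; simpl; lia].
  - exact (Hserves3 x' Hx').
  - exact (Hserves3 y' Hy').
  - unfold s3, s2, s1. rewrite <- !app_assoc. exact (Forall2_app Hoff Hserve3).
  - change (cs ++ [X1; X2; [Hub x'; Hub y']]) with (cs ++ [X1; X2] ++ [[Hub x'; Hub y']]).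
    now rewrite app_assoc, last_last.
  - rewrite path_cost_app, Hlast. lia.
  - subst s1 s2 s3. rewrite !alg_cost_snoc, Nat.mul_succ_r.
    (* [lia] compares atoms syntactically, and the lists above mix the convertible element
       types [node G] and [adv_node]. *)
    change (node G) with adv_node in *. lia.
Qed.

Lemma adversary_state_exists k : exists s cs x y n, adversary_state k s cs x y n.
Proof.
  induction k as [|k [s [cs [x [y [n Hstate]]]]]].
  - exists [Hub 0; Hub 1], [[Hub 0]; [Hub 0; Hub 1]], 0, 1, 2. exact adversary_start.
  - destruct (adversary_phase Hstate) as [s' [cs' [x' [y' Hstate']]]].
    now exists s', cs', x', y', (S n).
Qed.

Lemma adversary_not_competitive rho : (rho < INR D - 1/2)%R -> ~ competitive A rho.
Proof.
  intros Hrho. apply (not_competitive_of_lower_bound (a := 2 * D - 1) (b := 2) (K := 2 * D)).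
  - lia.
  - rewrite minus_INR, mult_INR by lia. simpl. lra.
  - intros k. destruct (adversary_state_exists k) as [s [cs [x [y [n Hstate]]]]].
    exists s. split; [exact (alg_cost_lower Hstate)|].
    exact (Nat.le_trans _ _ _ (OPT_le_path_cost (offline_serves Hstate)) (offline_cost Hstate)).
Qed.

End Adversary.

Theorem theorem7 (D : nat) (HD : 2 <= D)
  (A : forall G : layered_graph D, online_alg G)
  (HA : forall G : layered_graph D, MOO (A G)) :
  (forall G : layered_graph D, competitive (A G) (INR D - 1/2)%R) /\
  (forall rho : R, (rho < INR D - 1/2)%R ->
     exists G : layered_graph D, ~ competitive (A G) rho).
Proof.
  split.
  - intros G. exact (moo_competitive HD (HA G)).
  - intros rho Hrho. exists (adv_graph HD). exact (adversary_not_competitive (HA _) Hrho).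
Qed.
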